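(* Let $A\in\mathbb R^{n\times n}$ be Hurwitz, $B\in\mathbb R^n$, $0<P,Q\in\mathrm S^n$ with $Q=-(A^\top P+PA)$, $\mathscr b>0$ and fix $\gamma\in(0,1)$. Define, for $\alpha>0$, the convergence rate $c_{\mathrm e}(\alpha)=g(\alpha\mathscr b\gamma,Q,PB)/\lambda_{\max}(P)$. Then there exists a nonempty interval $\mathcal J=(0,\sup\mathcal J)$ on which $\alpha\mapsto c_{\mathrm e}(\alpha)$ is strictly increasing if and only if $g(1,Q,PB)>\lambda_{\min}(Q)$. Moreover, if $n\ge2$, then $c_{\mathrm e}(\alpha)\le\lambda_{\max}(Q)/\lambda_{\max}(P)$ for all $\alpha>0$; and if $g(1,Q,PB)>\lambda_{\min}(Q)$ fails, then $c_{\mathrm e}(\alpha)=\lambda_{\min}(Q)/\lambda_{\max}(P)$ for all $\alpha>0$.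
   Context: $\mathrm S^n$: real symmetric $n\times n$ matrices; $g(\phi,Q,v)=\lambda_{\min}(Q+\phi\,vv^\top)$. In the paper, $\mathscr b=\inf_x\beta(x)^\top K_{\mathrm b}\beta(x)$ and $\alpha$ scales the gain $K=\alpha K_{\mathrm b}$ of the static update law $\hat W=K\beta(e)B^\top Pe$, and $c_{\mathrm e}$ is the exponential rate in the transient bound on $\|e(t)\|$. *)

From HB Require Import structures.
From mathcomp Require Import all_boot all_order all_algebra.
From mathcomp Require Import complex reals.
From Stdlib Require Import ClassicalEpsilon.
Set Implicit Arguments. Unset Strict Implicit. Unset Printing Implicit Defensive.
Import Order.TTheory GRing.Theory Num.Theory.
Local Open Scope ring_scope.

Section Defs.
Variable R : realType.

Definition symmetric n (M : 'M[R]_n) : Prop := M^T = M.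

Definition posdef n (M : 'M[R]_n) : Prop :=
  symmetric M /\ forall x : 'cV[R]_n, x != 0 -> 0 < (x^T *m M *m x) 0 0.

Definition hurwitz n (A : 'M[R]_n) : Prop :=
  forall z : R[i], eigenvalue (map_mx (fun x : R => (x%:C)%C) A) z ->
    complex.Re z < 0.

Definition is_lambda_min n (M : 'M[R]_n) (m : R) : Prop :=
  eigenvalue M m /\ forall b, eigenvalue M b -> m <= b.
Definition is_lambda_max n (M : 'M[R]_n) (m : R) : Prop :=
  eigenvalue M m /\ forall b, eigenvalue M b -> b <= m.

Definition lambda_min n (M : 'M[R]_n) : R :=
  epsilon (inhabits 0) (is_lambda_min M).
Definition lambda_max n (M : 'M[R]_n) : R :=
  epsilon (inhabits 0) (is_lambda_max M).

Definition g n (phi : R) (Q : 'M[R]_n) (v : 'cV[R]_n) : R :=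
  lambda_min (Q + phi *: (v *m v^T)).

Definition c_e n (b gamma : R) (P Q : 'M[R]_n) (B : 'cV[R]_n) (alpha : R) : R :=
  g (alpha * b * gamma) Q (P *m B) / lambda_max P.

End Defs.

(* Q + phi v v^T has quadratic form x |-> x^T Q x + phi (v^T x)^2, so by the
   Rayleigh characterisation of the extreme eigenvalues (obtained from the
   complex spectral theorem applied to the complexification of a real
   symmetric matrix), g(phi) = lambda_min(Q + phi v v^T) is a minimum of affine
   functions of phi: nondecreasing, concave, and at most g(0) + K phi.  If
   g(1) = g(0) = lambda_min(Q), concavity forces g to be constant on [0, +oo);
   otherwise g(p) < g(1) for some small p, and concavity makes g strictly
   increasing on [0, p].  Testing the form on a nonzero x orthogonal to v,
   which exists when n >= 2, gives g(phi) <= lambda_max(Q). *)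

From HB Require Import structures.
From mathcomp Require Import all_boot all_order all_algebra.
From mathcomp Require Import complex reals.
From Stdlib Require Import ClassicalEpsilon.
From mathcomp Require Import lra.
Set Implicit Arguments.
Unset Strict Implicit.
Unset Printing Implicit Defensive.
Import Order.TTheory GRing.Theory Num.Theory.
Local Open Scope ring_scope.
Local Open Scope sesquilinear_scope.

Local Notation qform M x := ((x^T *m M *m x) 0 0).
Local Notation sqnorm x := ((x^T *m x) 0 0).

Section RealSpectral.
Variable R : realType.
Local Notation toC := (real_complex R).

Lemma conj_real_complex (x : R) : (toC x)^* = toC x.
Proof. by apply: conj_Creal; rewrite complex_real. Qed.

Lemma complexified_qform n (M : 'M[R]_n) (x : 'cV[R]_n) :
  ((map_mx toC x)^t* *m map_mx toC M *m map_mx toC x) 0 0 = toC (qform M x).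
Proof.
have -> : (map_mx toC x)^t* = map_mx toC x^T.
  by apply/matrixP => i j; rewrite !mxE conj_real_complex.
by rewrite -!map_mxM mxE.
Qed.

Lemma diag_mx_form n (e : 'rV[R[i]]_n) (y : 'cV[R[i]]_n) :
  (y^t* *m diag_mx e *m y) 0 0 = \sum_i e 0 i * `|y i 0| ^+ 2.
Proof.
rewrite -mulmxA mul_diag_mx mxE; apply: eq_bigr => i _.
by rewrite !mxE normCKC mulrCA mulrC.
Qed.

Lemma sqr_norm_complex (z : R[i]) :
  `|z| ^+ 2 = toC (complex.Re z ^+ 2 + complex.Im z ^+ 2).
Proof. by rewrite add_Re2_Im2. Qed.

Lemma complexified_qform_spectral n (N : 'M[R]_n) (U : 'M[R[i]]_n) e
    (x : 'cV[R]_n) :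
  map_mx toC N = U^t* *m diag_mx e *m U ->
  toC (qform N x) = \sum_i e 0 i * `|(U *m map_mx toC x) i 0| ^+ 2.
Proof.
move=> NE; rewrite -complexified_qform NE -diag_mx_form.
by rewrite trmx_mul map_mxM !mulmxA.
Qed.

Lemma complexified_sym_hermitian n (M : 'M[R]_n) :
  M^T = M -> map_mx toC M \is hermsymmx.
Proof.
move=> sM; rewrite is_hermitianmxE expr0 scale1r; apply/eqP/matrixP => i j.
by rewrite !mxE conj_real_complex -[in LHS]sM mxE.
Qed.

Lemma eigenvalue_complexified n (M : 'M[R]_n) (a : R) :
  eigenvalue (map_mx toC M) (toC a) -> eigenvalue M a.
Proof. by rewrite !eigenvalue_root_char -map_char_poly fmorph_root. Qed.

Lemma unitarymx_row_neq0 n (U : 'M[R[i]]_n) i :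
  U \is unitarymx -> row i U != 0.
Proof.
move=> U_unitary; apply/eqP => Ui0; have := row_mul i U (U^t*).
rewrite Ui0 mul0mx (unitarymxP U_unitary) => /rowP/(_ i).
by rewrite !mxE eqxx /= => /eqP; rewrite oner_eq0.
Qed.

Lemma sym_qform_spectral n (M : 'M[R]_n) : M^T = M ->
  exists2 d : 'rV[R]_n, forall i, eigenvalue M (d 0 i) &
    forall x : 'cV_n, exists2 w : 'rV[R]_n, forall i, 0 <= w 0 i &
      sqnorm x = \sum_i w 0 i /\ qform M x = \sum_i d 0 i * w 0 i.
Proof.
move=> /complexified_sym_hermitian M_herm.
have /orthomx_spectralP := hermitian_normalmx M_herm.
set U := spectralmx _; set dc := spectral_diag _.
have U_unitary : U \is unitarymx by apply: spectral_unitarymx.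
rewrite invmx_unitary // => ME.
have dcE i : toC (complex.Re (dc 0 i)) = dc 0 i.
  apply: RRe_real.
  by have /mxOverP := hermitian_spectral_diag_real M_herm; apply.
exists (map_mx (@complex.Re R) dc) => [i|x].
  apply: eigenvalue_complexified; rewrite mxE dcE; apply/eigenvalueP.
  exists (row i U); last exact: unitarymx_row_neq0.
  rewrite -row_mul ME !mulmxA (unitarymxP U_unitary) mul1mx.
  by rewrite row_mul row_diag_mx -scalemxAl -rowE.
pose y := U *m map_mx toC x.
(* w i = |(U x)_i|^2, where U is unitary and diagonalises M over R[i]. *)
pose w := \row_i (complex.Re (y i 0) ^+ 2 + complex.Im (y i 0) ^+ 2).
have yE i : `|y i 0| ^+ 2 = toC (w 0 i) by rewrite sqr_norm_complex [w 0 i]mxE.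
exists w => [i|]; first by rewrite mxE addr_ge0 ?sqr_ge0.
split; apply: complexI.
  rewrite -[x^T]mulmx1 (@complexified_qform_spectral _ _ U (const_mx 1)).
    by rewrite rmorph_sum; apply: eq_bigr => i _; rewrite mxE mul1r yE.
  by rewrite map_scalar_mx rmorph1 diag_const_mx mulmx1 -[U^t*]mul1mx mulmxKtV.
rewrite (complexified_qform_spectral _ ME) rmorph_sum; apply: eq_bigr => i _.
by rewrite rmorphM /= yE; congr (_ * _); rewrite mxE dcE.
Qed.

Lemma sqnorm_ge0 n (x : 'cV[R]_n) : 0 <= sqnorm x.
Proof. by rewrite mxE; apply: sumr_ge0 => i _; rewrite mxE -expr2 sqr_ge0. Qed.

Lemma sqnorm_gt0 n (x : 'cV[R]_n) : x != 0 -> 0 < sqnorm x.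
Proof.
move=> x_neq0; rewrite lt_def sqnorm_ge0 andbT; apply: contra x_neq0.
rewrite mxE => /eqP sum0; have x2_eq0 i : x^T 0 i * x i 0 = 0.
  by apply: (psumr_eq0P _ sum0) => // k _; rewrite mxE -expr2 sqr_ge0.
apply/eqP/matrixP => i j; rewrite ord1 mxE; apply/eqP.
by have := x2_eq0 i; rewrite mxE -expr2 => /eqP; rewrite sqrf_eq0.
Qed.

Lemma eigenvalue_qform n (M : 'M[R]_n) b : eigenvalue M b ->
  exists2 x : 'cV_n, x != 0 & qform M x = b * sqnorm x.
Proof.
case/eigenvalueP => u uM u_neq0; exists u^T; first by rewrite trmx_eq0.
by rewrite trmxK uM -scalemxAl mxE.
Qed.

Lemma eigenvalue_ge_of_qform n (M : 'M[R]_n) c b :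
  (forall x : 'cV_n, c * sqnorm x <= qform M x) -> eigenvalue M b -> c <= b.
Proof.
move=> lower /eigenvalue_qform[x x_neq0 xE]; have := lower x.
by rewrite xE ler_pM2r // sqnorm_gt0.
Qed.

Lemma eigenvalue_le_of_qform n (M : 'M[R]_n) c b :
  (forall x : 'cV_n, qform M x <= c * sqnorm x) -> eigenvalue M b -> b <= c.
Proof.
move=> upper /eigenvalue_qform[x x_neq0 xE]; have := upper x.
by rewrite xE ler_pM2r // sqnorm_gt0.
Qed.

Lemma lambda_min_eq n (M : 'M[R]_n) m : is_lambda_min M m -> lambda_min M = m.
Proof.
move=> m_min; have l_min : is_lambda_min M (lambda_min M).
  by apply: epsilon_spec; exists m.
by apply/le_anti; rewrite l_min.2 ?m_min.1 // m_min.2 // l_min.1.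
Qed.

Lemma lambda_max_eq n (M : 'M[R]_n) m : is_lambda_max M m -> lambda_max M = m.
Proof.
move=> m_max; have l_max : is_lambda_max M (lambda_max M).
  by apply: epsilon_spec; exists m.
by apply/le_anti; rewrite m_max.2 ?l_max.1 // l_max.2 // m_max.1.
Qed.

Lemma lambda_minP n (M : 'M[R]_n) : M^T = M -> (0 < n)%N ->
  (forall x : 'cV_n, lambda_min M * sqnorm x <= qform M x) /\
  exists2 x : 'cV_n, x != 0 & qform M x = lambda_min M * sqnorm x.
Proof.
move=> sM n_gt0; have [d eig_d d_form] := sym_qform_spectral sM.
case: (arg_minP (fun j => d 0 j) (isT : xpredT (Ordinal n_gt0))) => i _ d_min.
have lower (x : 'cV_n) : d 0 i * sqnorm x <= qform M x.
  have [w w_ge0 [-> ->]] := d_form x; rewrite mulr_sumr; apply: ler_sum => j _.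
  by apply: ler_wpM2r; [exact: w_ge0 | exact: d_min].
have -> : lambda_min M = d 0 i.
  by apply: lambda_min_eq; split=> // b; apply: eigenvalue_ge_of_qform.
by split=> //; apply: eigenvalue_qform.
Qed.

Lemma lambda_maxP n (M : 'M[R]_n) : M^T = M -> (0 < n)%N ->
  (forall x : 'cV_n, qform M x <= lambda_max M * sqnorm x) /\
  exists2 x : 'cV_n, x != 0 & qform M x = lambda_max M * sqnorm x.
Proof.
move=> sM n_gt0; have [d eig_d d_form] := sym_qform_spectral sM.
case: (arg_maxP (fun j => d 0 j) (isT : xpredT (Ordinal n_gt0))) => i _ d_max.
have upper (x : 'cV_n) : qform M x <= d 0 i * sqnorm x.
  have [w w_ge0 [-> ->]] := d_form x; rewrite mulr_sumr; apply: ler_sum => j _.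
  by apply: ler_wpM2r; [exact: w_ge0 | exact: d_max].
have -> : lambda_max M = d 0 i.
  by apply: lambda_max_eq; split=> // b; apply: eigenvalue_le_of_qform.
by split=> //; apply: eigenvalue_qform.
Qed.

Lemma posdef_lambda_max_gt0 n (M : 'M[R]_n) : (0 < n)%N -> posdef M ->
  0 < lambda_max M.
Proof.
move=> n_gt0 [sM M_pos]; have [_ [x x_neq0 xE]] := lambda_maxP sM n_gt0.
by have := M_pos x x_neq0; rewrite xE pmulr_lgt0 // sqnorm_gt0.
Qed.

Lemma exists_orthogonal n (v : 'cV[R]_n) : (2 <= n)%N ->
  exists2 x : 'cV_n, x != 0 & (v^T *m x) 0 0 = 0.
Proof.
move=> n_ge2; set u := nz_row (kermx v).
have ker_neq0 : kermx v != 0.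
  rewrite -mxrank_eq0 mxrank_ker -lt0n subn_gt0.
  exact: leq_ltn_trans (rank_leq_col v) n_ge2.
exists u^T; first by rewrite trmx_eq0 nz_row_eq0.
have /sub_kermxP uv0 : (u <= kermx v)%MS by apply: nz_row_sub.
by rewrite -[v^T *m _]trmxK trmx_mul !trmxK uv0 trmx0 mxE.
Qed.

End RealSpectral.

Section RankOneUpdate.
Variables (R : realType) (n : nat) (Q : 'M[R]_n) (v : 'cV[R]_n).
Hypotheses (sQ : Q^T = Q) (n_gt0 : (0 < n)%N).

Local Notation G phi := (g phi Q v).
Local Notation vdot x := ((v^T *m x) 0 0).

Lemma qform_rank_one_update phi (x : 'cV_n) :
  qform (Q + phi *: (v *m v^T)) x = qform Q x + phi * vdot x ^+ 2.
Proof.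
rewrite mulmxDr mulmxDl -scalemxAr -scalemxAl [LHS]mxE; congr (_ + _).
rewrite mxE (mulmxA x^T v v^T) -(mulmxA (x^T *m v)) mxE big_ord1 expr2.
by rewrite -[x^T *m v]trmxK trmx_mul trmxK mxE.
Qed.

Lemma rank_one_update_sym phi :
  (Q + phi *: (v *m v^T))^T = Q + phi *: (v *m v^T).
Proof. by rewrite linearD /= linearZ /= trmx_mul trmxK sQ. Qed.

Lemma g0E : G 0 = lambda_min Q.
Proof. by rewrite /g scale0r addr0. Qed.

Lemma g_lower phi (x : 'cV_n) :
  G phi * sqnorm x <= qform Q x + phi * vdot x ^+ 2.
Proof.
rewrite -qform_rank_one_update.
exact: (lambda_minP (rank_one_update_sym phi) n_gt0).1.
Qed.

Lemma g_attained phi :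
  exists2 x : 'cV_n, x != 0 & qform Q x + phi * vdot x ^+ 2 = G phi * sqnorm x.
Proof.
have [x x_neq0 xE] := (lambda_minP (rank_one_update_sym phi) n_gt0).2.
by exists x; rewrite // -qform_rank_one_update.
Qed.

Lemma g_nondecreasing a c : a <= c -> G a <= G c.
Proof.
move=> le_ac; have [x /sqnorm_gt0 x_gt0 xE] := g_attained c.
have := g_lower a x; have := sqr_ge0 (vdot x); rewrite -(ler_pM2r x_gt0); nra.
Qed.

Lemma g_concave a c x : a <= c -> c <= x ->
  (c - a) * G x + (x - c) * G a <= (x - a) * G c.
Proof.
move=> le_ac le_cx; have [y /sqnorm_gt0 y_gt0 yE] := g_attained c.
have ca_ge0 : 0 <= c - a by rewrite subr_ge0.
have xc_ge0 : 0 <= x - c by rewrite subr_ge0.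
rewrite -(ler_pM2r y_gt0).
have := ler_wpM2l ca_ge0 (g_lower x y); have := ler_wpM2l xc_ge0 (g_lower a y).
nra.
Qed.

Lemma g_le_affine : exists2 K, 0 <= K & forall phi, G phi <= G 0 + phi * K.
Proof.
have [x /sqnorm_gt0 x_gt0 xE] := g_attained 0; rewrite mul0r addr0 in xE.
exists (vdot x ^+ 2 / sqnorm x) => [|phi].
  by rewrite divr_ge0 ?sqr_ge0 ?ltW.
rewrite -(ler_pM2r x_gt0) mulrDl -mulrA divfK ?gt_eqF // -xE.
exact: g_lower.
Qed.

Lemma g_flat : ~ (lambda_min Q < G 1) ->
  forall phi, 0 <= phi -> G phi = lambda_min Q.
Proof.
rewrite -g0E => /negP; rewrite -leNgt => le10 phi phi_ge0.
apply/le_anti; rewrite [G 0 <= _]g_nondecreasing // andbT.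
have [le_phi1|lt1phi] := leP phi 1.
  exact: le_trans (g_nondecreasing _) le10.
have := g_concave ler01 (ltW lt1phi); have := ler_wpM2l phi_ge0 le10; nra.
Qed.

Lemma exists_g_lt_g1 : lambda_min Q < G 1 -> exists2 p, 0 < p < 1 & G p < G 1.
Proof.
rewrite -g0E => lt01; have [K K_ge0 G_affine] := g_le_affine.
pose d := G 1 - G 0; have d_gt0 : 0 < d by rewrite subr_gt0.
have den_gt0 : 0 < d + K + 1 by lra.
pose p := d / (d + K + 1).
have pE : p * (d + K + 1) = d by rewrite divfK ?gt_eqF.
have p_gt0 : 0 < p by rewrite divr_gt0.
exists p; first by rewrite p_gt0 ltr_pdivrMr // mul1r; lra.
have := G_affine p; rewrite /d in pE; nra.
Qed.

Lemma g_lt_of_lt_g1 a1 a2 : a1 < a2 -> a2 < 1 -> G a1 < G 1 -> G a1 < G a2.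
Proof.
move=> lt12 lt21 lt_a1_1; rewrite ltNge; apply/negP => le21.
have := g_concave (ltW lt12) (ltW lt21); nra.
Qed.

Lemma g_increasing_near0_iff k : 0 < k ->
  (exists s, 0 < s /\ forall a1 a2, 0 < a1 -> a1 < a2 -> a2 < s ->
     G (a1 * k) < G (a2 * k)) <-> lambda_min Q < G 1.
Proof.
move=> k_gt0; split=> [[s [s_gt0 incr]]|lt01].
  apply: contraT => /negP/g_flat flat.
  have : G (s / 3 * k) < G (s / 2 * k) by apply: incr; lra.
  by rewrite !flat ?ltxx // mulr_ge0 //; lra.
have [p /andP[p_gt0 p_lt1] Gp_lt] := exists_g_lt_g1 lt01.
exists (p / k); split=> [|a1 a2 a1_gt0 lt12 a2_lt]; first exact: divr_gt0.
have a2k_lt : a2 * k < p by rewrite -ltr_pdivlMr.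
have lt12k : a1 * k < a2 * k by rewrite ltr_pM2r.
apply: g_lt_of_lt_g1 => //; first lra.
by apply: le_lt_trans Gp_lt; apply: g_nondecreasing; lra.
Qed.

Lemma g_le_lambda_max phi : (2 <= n)%N -> G phi <= lambda_max Q.
Proof.
move=> n_ge2; have [x /sqnorm_gt0 x_gt0 vx0] := exists_orthogonal v n_ge2.
rewrite -(ler_pM2r x_gt0); apply: le_trans (g_lower phi x) _.
by rewrite vx0 expr0n mulr0 addr0; apply: (lambda_maxP sQ n_gt0).1.
Qed.

End RankOneUpdate.

Theorem corollary1 (R : realType) (n : nat) (A : 'M[R]_n) (B : 'cV[R]_n)
  (P Q : 'M[R]_n) (b gamma : R) :
  (0 < n)%N ->
  hurwitz A ->
  posdef P -> posdef Q ->
  Q = - (A^T *m P + P *m A) ->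
  0 < b ->
  0 < gamma < 1 ->
  [/\ (exists s : R, 0 < s /\
         forall a1 a2 : R, 0 < a1 -> a1 < a2 -> a2 < s ->
           c_e b gamma P Q B a1 < c_e b gamma P Q B a2)
      <-> lambda_min Q < g 1 Q (P *m B),
      (2 <= n)%N ->
        forall alpha : R, 0 < alpha ->
          c_e b gamma P Q B alpha <= lambda_max Q / lambda_max P
    & ~ (lambda_min Q < g 1 Q (P *m B)) ->
        forall alpha : R, 0 < alpha ->
          c_e b gamma P Q B alpha = lambda_min Q / lambda_max P].
Proof.
move=> n_gt0 _ P_posdef [sQ _] _ b_gt0 /andP[gamma_gt0 _].
have lP_gt0 := posdef_lambda_max_gt0 n_gt0 P_posdef.
have k_gt0 : 0 < b * gamma by rewrite mulr_gt0.
have c_eE alpha : c_e b gamma P Q B alpha =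
    g (alpha * (b * gamma)) Q (P *m B) / lambda_max P.
  by rewrite /c_e mulrA.
have c_e_lt a1 a2 : (c_e b gamma P Q B a1 < c_e b gamma P Q B a2) =
    (g (a1 * (b * gamma)) Q (P *m B) < g (a2 * (b * gamma)) Q (P *m B)).
  by rewrite !c_eE ltr_pM2r ?invr_gt0.
split.
- rewrite -(g_increasing_near0_iff _ sQ n_gt0 k_gt0).
  by split=> -[s [s_gt0 incr]]; exists s; split=> // a1 a2 *;
    [rewrite -c_e_lt | rewrite c_e_lt]; apply: incr.
- move=> n_ge2 alpha _; rewrite c_eE ler_pM2r ?invr_gt0 //.
  exact: g_le_lambda_max.
- move=> not_lt alpha alpha_gt0; rewrite c_eE g_flat // mulr_ge0 // ltW //.
Qed.
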